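(* Let $t\in\mathcal{M}$. Then there exists a tight derivation $\Phi\triangleright\Gamma\vdash^{(0,0,0,|t|)}t:\mathtt{t}$ in system $\mathscr{E}$, for some context $\Gamma$ and some tight type $\mathtt{t}$.
   Context: Pair pattern calculus: patterns $p,q ::= x\mid\langle p,q\rangle$ (linear); $\mathrm{var}(p)$ = variables of $p$; $p\# q$ means disjoint variables. Terms $t,u ::= x\mid\lambda p.t\mid\langle t,u\rangle\mid t\,u\mid t[p/u]$, $\mathrm{var}(p)$ bound in $t$ in $\lambda p.t$ and $t[p/u]$; terms modulo $\alpha$. Canonical forms $\mathcal{M} ::= \lambda p.\mathcal{M}\mid\langle t,t\rangle\mid\mathcal{M}[\langle p_1,p_2\rangle/\mathcal{N}]\mid\mathcal{N}$, $\mathcal{N} ::= x\mid\mathcal{N}\,t\mid\mathcal{N}[\langle p_1,p_2\rangle/\mathcal{N}]$, with size $|x|=0$, $|\langle t,u\rangle|=1$, $|\mathcal{N}t|=|\mathcal{N}|+1$, $|\lambda p.\mathcal{M}|=|\mathcal{M}|+1$, $|\mathcal{M}[\langle p_1,p_2\rangle/\mathcal{N}]|=|\mathcal{M}|+|\mathcal{N}|+1$. System $\mathscr{E}$. Types: tight types $\mathtt{t} ::= \bullet_{\mathcal{N}}\mid\bullet_{\mathcal{M}}$; types $\sigma ::= \mathtt{t}\mid \mathcal{A}_1\times\mathcal{A}_2\mid \mathcal{A}\to\sigma$; multi-types $\mathcal{A} ::= [\sigma_k]_{k\in K}$ (finite, possibly empty). Contexts map variables to multi-types, $\mathrm{dom}(\Gamma)$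 = variables with non-empty multi-type; $\wedge$ pointwise multiset union; $\Gamma|_p$ restriction to $\mathrm{var}(p)$; $\Gamma\setminus\mathrm{var}(p)$ removal. $\mathrm{tight}(\sigma)$ iff $\sigma\in\{\bullet_{\mathcal{N}},\bullet_{\mathcal{M}}\}$, extended elementwise. Rules: (pat_v) $x:\mathcal{A}\Vdash^{(1,0,0)} x:\mathcal{A}$. (pat_×) from $\Gamma\Vdash^{(e_p,m_p,f_p)}p:\mathcal{A}$, $\Delta\Vdash^{(e_q,m_q,f_q)}q:\mathcal{B}$, $p\#q$ infer $\Gamma\wedge\Delta\Vdash^{(e_p+e_q,1+m_p+m_q,f_p+f_q)}\langle p,q\rangle:[\mathcal{A}\times\mathcal{B}]$. (pat_p) if $\mathrm{dom}(\Gamma)\subseteq\mathrm{var}(\langle p,q\rangle)$ and $\mathrm{tight}(\Gamma)$ then $\Gamma\Vdash^{(0,0,1)}\langle p,q\rangle:[\bullet_{\mathcal{N}}]$. (ax) $x:[\sigma]\vdash^{(0,0,0,0)}x:\sigma$. (abs) from $\Gamma\vdash^{(b,e,m,f)}t:\sigma$ and $\Gamma|_p\Vdash^{(e_p,m_p,f_p)}p:\mathcal{A}$ infer $\Gamma\setminus\mathrm{var}(p)\vdash^{(b+1,e+e_p,m+m_p,f+f_p)}\lambda p.t:\mathcal{A}\to\sigma$. (abs_p) from $\Gamma\vdash^{(b,e,m,f)}t:\mathtt{t}$ ($\mathtt{t}$ tight) and $\mathrm{tight}(\Gamma|_p)$ infer $\Gamma\setminus\mathrm{var}(p)\vdash^{(b,e,m,f+1)}\lambda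 p.t:\bullet_{\mathcal{M}}$. (many) from $(\Gamma_k\vdash^{(b_k,e_k,m_k,f_k)}t:\sigma_k)_{k\in K}$ infer $\wedge_k\Gamma_k\vdash^{(\sum b_k,\sum e_k,\sum m_k,\sum f_k)}t:[\sigma_k]_{k\in K}$. (app) from $\Gamma\vdash^{(b_t,e_t,m_t,f_t)}t:\mathcal{A}\to\sigma$, $\Delta\vdash^{(b_u,e_u,m_u,f_u)}u:\mathcal{A}$ infer $\Gamma\wedge\Delta\vdash^{(b_t+b_u,e_t+e_u,m_t+m_u,f_t+f_u)}t\,u:\sigma$. (app_p) from $\Gamma\vdash^{(b,e,m,f)}t:\bullet_{\mathcal{N}}$ infer $\Gamma\vdash^{(b,e,m,f+1)}t\,u:\bullet_{\mathcal{N}}$. (pair) from $\Gamma\vdash^{(b_t,e_t,m_t,f_t)}t:\mathcal{A}$, $\Delta\vdash^{(b_u,e_u,m_u,f_u)}u:\mathcal{B}$ infer $\Gamma\wedge\Delta\vdash^{(b_t+b_u,e_t+e_u,m_t+m_u,f_t+f_u)}\langle t,u\rangle:\mathcal{A}\times\mathcal{B}$. (pair_p) $\vdash^{(0,0,0,1)}\langle t,u\rangle:\bullet_{\mathcal{M}}$. (match) from $\Gamma\vdash^{(b_t,e_t,m_t,f_t)}t:\sigma$, $\Gamma|_p\Vdash^{(e_p,m_p,f_p)}p:\mathcal{A}$, $\Delta\vdash^{(b_u,e_u,m_u,f_u)}u:\mathcal{A}$ infer $(\Gamma\setminus\mathrm{var}(p))\wedge\Delta\vdash^{(b_t+b_u,e_t+e_u+e_p,m_t+m_u+m_p,f_t+f_u+f_p)}t[p/u]:\sigma$.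 A derivation is tight if its context and its type are tight. *)

From mathcomp Require Import all_boot.
Set Implicit Arguments. Unset Strict Implicit. Unset Printing Implicit Defensive.

Definition var := nat.

Inductive pat : Type :=
| PVar : var -> pat
| PPair : pat -> pat -> pat.

Fixpoint pvars (p : pat) : seq var :=
  match p with
  | PVar x => [:: x]
  | PPair p q => pvars p ++ pvars q
  end.

Definition linear (p : pat) : bool := uniq (pvars p).
Definition pdisj (p q : pat) : Prop := forall x, x \in pvars p -> x \notin pvars q.

Inductive term : Type :=
| Var : var -> term
| Lam : pat -> term -> term
| Pair : term -> term -> term
| App : term -> term -> term
| Sub : term -> pat -> term -> term.   (* Sub t p u  =  t[p/u] *)

Fixpoint wf_term (t : term) : Prop :=
  match t with
  | Var _ => True
  | Lam p t => linear p /\ wf_term t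
  | Pair t u => wf_term t /\ wf_term u
  | App t u => wf_term t /\ wf_term u
  | Sub t p u => linear p /\ wf_term t /\ wf_term u
  end.

Inductive isM : term -> Prop :=
| M_lam : forall p t, isM t -> isM (Lam p t)
| M_pair : forall t u, isM (Pair t u)
| M_sub : forall t p1 p2 u, isM t -> isN u -> isM (Sub t (PPair p1 p2) u)
| M_N : forall t, isN t -> isM t
with isN : term -> Prop :=
| N_var : forall x, isN (Var x)
| N_app : forall t u, isN t -> isN (App t u)
| N_sub : forall t p1 p2 u, isN t -> isN u -> isN (Sub t (PPair p1 p2) u).

(* size of canonical forms (the clauses given in the paper, read on terms) *)
Fixpoint csize (t : term) : nat :=
  match t with
  | Var _ => 0
  | Pair _ _ => 1
  | App t _ => csize t + 1
  | Lam _ t => csize t + 1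
  | Sub t _ u => csize t + csize u + 1
  end.

(* Types: sigma ::= bullet_N | bullet_M | A1 x A2 | A -> sigma ;
   multi-types A ::= [sigma_k]_k are represented as finite lists. *)
Inductive ty : Type :=
| TN : ty
| TM : ty
| TProd : seq ty -> seq ty -> ty
| TArr : seq ty -> ty -> ty.

Definition mty := seq ty.

Definition tight (s : ty) : Prop := s = TN \/ s = TM.
Fixpoint mtight (A : mty) : Prop :=
  match A with [::] => True | s :: A' => tight s /\ mtight A' end.

Definition ctx := var -> mty.
Definition cempty : ctx := fun _ => [::].
Definition csing (x : var) (A : mty) : ctx := fun y => if y == x then A else [::].
Definition cunion (G D : ctx) : ctx := fun y => G y ++ D y.
Definition crestr (G : ctx) (p : pat) : ctx :=
  fun y => if y \in pvars p then G y else [::].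
Definition cremove (G : ctx) (p : pat) : ctx :=
  fun y => if y \in pvars p then [::] else G y.
Definition ctight (G : ctx) : Prop := forall y, mtight (G y).
Definition in_dom (G : ctx) (y : var) : Prop := G y <> [::].

Inductive pat_typ : ctx -> pat -> mty -> nat * nat * nat -> Prop :=
| pat_v : forall x A, pat_typ (csing x A) (PVar x) A (1, 0, 0)
| pat_x : forall G D p q A B ep mp fp eq mq fq,
    pat_typ G p A (ep, mp, fp) -> pat_typ D q B (eq, mq, fq) -> pdisj p q ->
    pat_typ (cunion G D) (PPair p q) [:: TProd A B] (ep + eq, 1 + mp + mq, fp + fq)
| pat_p : forall G p q,
    (forall y, in_dom G y -> y \in pvars (PPair p q)) -> ctight G ->
    pat_typ G (PPair p q) [:: TN] (0, 0, 1).

Inductive typ : ctx -> term -> ty -> nat * nat * nat * nat -> Prop :=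
| t_ax : forall x s, typ (csing x [:: s]) (Var x) s (0, 0, 0, 0)
| t_abs : forall G p t s A b e m f ep mp fp,
    typ G t s (b, e, m, f) -> pat_typ (crestr G p) p A (ep, mp, fp) ->
    typ (cremove G p) (Lam p t) (TArr A s) (b + 1, e + ep, m + mp, f + fp)
| t_abs_p : forall G p t s b e m f,
    typ G t s (b, e, m, f) -> tight s -> ctight (crestr G p) ->
    typ (cremove G p) (Lam p t) TM (b, e, m, f + 1)
| t_app : forall G D t u A s bt et mt ft bu eu mu fu,
    typ G t (TArr A s) (bt, et, mt, ft) -> typ_many D u A (bu, eu, mu, fu) ->
    typ (cunion G D) (App t u) s (bt + bu, et + eu, mt + mu, ft + fu)
| t_app_p : forall G t u b e m f,
    typ G t TN (b, e, m, f) -> typ G (App t u) TN (b, e, m, f + 1)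
| t_pair : forall G D t u A B bt et mt ft bu eu mu fu,
    typ_many G t A (bt, et, mt, ft) -> typ_many D u B (bu, eu, mu, fu) ->
    typ (cunion G D) (Pair t u) (TProd A B) (bt + bu, et + eu, mt + mu, ft + fu)
| t_pair_p : forall t u, typ cempty (Pair t u) TM (0, 0, 0, 1)
| t_match : forall G D t p u s A bt et mt ft ep mp fp bu eu mu fu,
    typ G t s (bt, et, mt, ft) -> pat_typ (crestr G p) p A (ep, mp, fp) ->
    typ_many D u A (bu, eu, mu, fu) ->
    typ (cunion (cremove G p) D) (Sub t p u) s
        (bt + bu, et + eu + ep, mt + mu + mp, ft + fu + fp)
with typ_many : ctx -> term -> mty -> nat * nat * nat * nat -> Prop :=
| many_nil : forall t, typ_many cempty t [::] (0, 0, 0, 0)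
| many_cons : forall G D t s A b e m f b' e' m' f',
    typ G t s (b, e, m, f) -> typ_many D t A (b', e', m', f') ->
    typ_many (cunion G D) t (s :: A) (b + b', e + e', m + m', f + f').

(** Every canonical form is typable with the persistent rules alone (ax,
    app_p, abs_p, pair_p, and match with a pat_p-typed pair pattern).  These
    rules leave the counters b, e, m at 0 and each adds 1 to f exactly at the
    constructors counted by |t|.  Neutral terms receive the type bullet_N, which
    is what app_p and the argument of a matching require. *)

From Pilot Require Import Defs.
From mathcomp Require Import all_boot.

Set Implicit Arguments.
Unset Strict Implicit.

Lemma mtight_cat (A B : mty) : mtight A -> mtight B -> mtight (A ++ B).
Proof. by elim: A => //= s A IHA [Hs HA] HB; split; last exact: IHA. Qed.

Lemma ctight_cunion (G D : ctx) : ctight G -> ctight D -> ctight (cunion G D).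
Proof. by move=> HG HD y; apply: mtight_cat. Qed.

Lemma ctight_crestr (G : ctx) (p : pat) : ctight G -> ctight (crestr G p).
Proof. by move=> HG y; rewrite /crestr; case: ifP. Qed.

Lemma ctight_cremove (G : ctx) (p : pat) : ctight G -> ctight (cremove G p).
Proof. by move=> HG y; rewrite /cremove; case: ifP. Qed.

Lemma ctight_csing (x : var) (s : ty) : tight s -> ctight (csing x [:: s]).
Proof. by move=> Hs y; rewrite /csing; case: ifP. Qed.

Lemma typ_many1 (G : ctx) (t : term) (s : ty) (b e m f : nat) :
  typ G t s (b, e, m, f) -> typ_many (cunion G cempty) t [:: s] (b, e, m, f).
Proof. by move=> Ht; have := many_cons Ht (many_nil t); rewrite !addn0. Qed.

Lemma pat_typ_pair_tight (G : ctx) (p1 p2 : pat) :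
  ctight G -> pat_typ (crestr G (PPair p1 p2)) (PPair p1 p2) [:: TN] (0, 0, 1).
Proof.
move=> HG; apply: pat_p; last exact: ctight_crestr.
by move=> y; rewrite /in_dom /crestr; case: ifP.
Qed.

Definition tightly_typable (t : term) (s : ty) : Prop :=
  exists G : ctx, ctight G /\ typ G t s (0, 0, 0, csize t).

Lemma tightly_typable_Var (x : var) : tightly_typable (Var x) TN.
Proof.
exists (csing x [:: TN]); split; last exact: t_ax.
by apply: ctight_csing; left.
Qed.

Lemma tightly_typable_App (t u : term) :
  tightly_typable t TN -> tightly_typable (App t u) TN.
Proof. by case=> G [HG Ht]; exists G; split=> //; exact: t_app_p. Qed.

Lemma tightly_typable_Lam (p : pat) (t : term) (s : ty) :
  tight s -> tightly_typable t s -> tightly_typable (Lam p t) TM.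
Proof.
move=> Hs [G [HG Ht]]; exists (cremove G p); split; first exact: ctight_cremove.
exact: t_abs_p Ht Hs (ctight_crestr p HG).
Qed.

Lemma tightly_typable_Pair (t u : term) : tightly_typable (Pair t u) TM.
Proof. by exists cempty; split=> //; apply: t_pair_p. Qed.

Lemma tightly_typable_Sub (t u : term) (p1 p2 : pat) (s : ty) :
  tightly_typable t s -> tightly_typable u TN ->
  tightly_typable (Defs.Sub t (PPair p1 p2) u) s.
Proof.
move=> [G [HG Ht]] [D [HD Hu]].
exists (cunion (cremove G (PPair p1 p2)) (cunion D cempty)); split.
  by apply: ctight_cunion; [apply: ctight_cremove | apply: ctight_cunion].
by have := t_match Ht (pat_typ_pair_tight p1 p2 HG) (typ_many1 Hu); rewrite !addn0.
Qed.

Lemma isN_tightly_typable (t : term) : isN t -> tightly_typable t TN.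
Proof.
elim=> {t} [x | t u _ Ht | t p1 p2 u _ Ht _ Hu].
- exact: tightly_typable_Var.
- exact: tightly_typable_App Ht.
- exact: tightly_typable_Sub Ht Hu.
Qed.

Lemma isM_tightly_typable (t : term) :
  isM t -> exists2 s : ty, tight s & tightly_typable t s.
Proof.
elim=> {t} [p t _ [s Hs Ht] | t u | t p1 p2 u _ [s Hs Ht] /isN_tightly_typable Hu
           | t /isN_tightly_typable Ht].
- by exists TM; [right | exact: tightly_typable_Lam Hs Ht].
- by exists TM; [right | exact: tightly_typable_Pair].
- by exists s => //; exact: tightly_typable_Sub Ht Hu.
- by exists TN; [left | exact: Ht].
Qed.

Theorem lemma7 (t : term) :
  wf_term t -> isM t ->
  exists (G : ctx) (s : ty),
    ctight G /\ tight s /\ typ G t s (0, 0, 0, csize t).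
Proof.
move=> _ /isM_tightly_typable [s Hs [G [HG Ht]]].
by exists G, s.
Qed.
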